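(* Let $X\subseteq\mathbb{R}^m$, $f=(f_1,\dots,f_d):X\to\mathbb{R}^d$ with $a_{i0}\le f_i(x)\le a_{in}$ for all $x\in X$, $i\in[d]$, and $\phi:\mathbb{R}^d\to\mathbb{R}$. Let $u:X\to\mathbb{R}^{d\times(n+1)}$ be a vector of convex functions such that for every $x\in X$ and $i\in[d]$: $u_{i0}(x)=a_{i0}$, $u_{in}(x)=f_i(x)$, and $u_{ij}(x)\le\min\{f_i(x),a_{ij}\}$ for $j\in[n-1]$. Let $W$ be a convex set containing $\{(x,s_{\cdot n})\mid s_{\cdot n}=f(x),\ x\in X\}$. Then $$\{(x,\mu)\mid \mu\le\phi(f(x)),\ x\in X\}\subseteq \operatorname{proj}_{(x,\mu)}\Bigl\{(x,\mu,s,\delta)\ \Bigm|\ \mu\le\operatorname{conc}_Q(\bar\phi)(s),\ (Z(s),\delta)\text{ satisfies (Inc-1)},\ u(x)\le s,\ (x,s_{\cdot n})\in W\Bigr\},$$ i.e. the right-hand set is an MICP relaxation of the hypograph of $\phi\circ f$.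
   Context: Let $d,n$ be positive integers, $[k]=\{1,\dots,k\}$. Let $a\in\mathbb{R}^{d\times(n+1)}$ with $a_{i0}<\dots<a_{in}$ for each $i$. For each $i$ let $0=\tau(i,0)<\tau(i,1)<\dots<\tau(i,l_i)=n$ be integers ($l_i\ge1$). Let $\Delta_i=\{z_i\in\mathbb{R}^{n+1}\mid1=z_{i0}\ge z_{i1}\ge\dots\ge z_{in}\ge0\}$. The system (Inc-1) in $(z,\delta)$, $\delta=(\delta_{it})_{i\in[d],t\in[l_i-1]}$: $z_i\in\Delta_i$, $\delta_{it}\in\{0,1\}$, $z_{i\tau(i,t)}\ge\delta_{it}\ge z_{i\tau(i,t)+1}$. For $s\in\mathbb{R}^{d\times(n+1)}$, $s_{\cdot n}=(s_{1n},\dots,s_{dn})$, and $Z(s)=(Z_1(s_1),\dots,Z_d(s_d))$ where $Z_i(s_i)=z_i$ with $z_{i0}=1$ and $z_{ij}=(s_{ij}-s_{i,j-1})/(a_{ij}-a_{i,j-1})$ for $j\in[n]$. Let $v_{ij}\in\mathbb{R}^{n+1}$ have $k$-th component $a_{i,\min\{k,j\}}$ ($k=0,\dots,n$), i.e. $v_{ij}=(a_{i0},\dots,a_{i,j-1},a_{ij},\dots,a_{ij})$; $Q_i=\operatorname{conv}\{v_{i0},\dots,v_{in}\}$, $Q=Q_1\times\dots\times Q_d$, and $\bar\phi:Q\to\mathbb{R}$, $\bar\phi(s)=\phi(s_{1n},\dots,s_{dn})$. $\operatorname{conc}_Q(\bar\phi)$ is the concave envelope of $\bar\phi$ over $Q$.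 *)

From mathcomp Require Import all_boot all_order all_algebra.
From mathcomp Require Import boolp classical_sets reals constructive_ereal ereal.

Set Implicit Arguments.
Unset Strict Implicit.
Unset Printing Implicit Defensive.

Import Order.TTheory GRing.Theory Num.Theory.
Local Open Scope ring_scope.
Local Open Scope classical_set_scope.

Section Defs.
Variable R : realType.

(* Indices: i ranges over 'I_d (0-based version of [d]), j over 0..n as
   'I_n.+1; the matrix a : 'M_(d, n.+1) has a i j = a_{ij}. *)

Definition ent (d n : nat) (s : 'M[R]_(d, n.+1)) (i : 'I_d) (j : nat) : R :=
  s i (inord j).

Definition Zmap (d n : nat) (a s : 'M[R]_(d, n.+1)) (i : 'I_d) (j : nat) : R :=
  if j == 0%N then 1
  else (ent s i j - ent s i j.-1) / (ent a i j - ent a i j.-1).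

Definition in_Delta (n : nat) (z : nat -> R) : Prop :=
  z 0%N = 1 /\ (forall j, (j < n)%N -> z j.+1 <= z j) /\ 0 <= z n.

Definition Inc1 (d n : nat) (l : 'I_d -> nat) (tau : 'I_d -> nat -> nat)
    (z : 'I_d -> nat -> R) (delta : 'I_d -> nat -> R) : Prop :=
  forall i : 'I_d,
    in_Delta n (z i) /\
    forall t : nat, (1 <= t)%N -> (t <= (l i).-1)%N ->
      (delta i t = 0 \/ delta i t = 1) /\
      z i (tau i t) >= delta i t /\ delta i t >= z i (tau i t).+1.

Definition vtx (d n : nat) (a : 'M[R]_(d, n.+1)) (i : 'I_d) (j : 'I_n.+1)
  : 'rV[R]_n.+1 := \row_(k < n.+1) a i (inord (minn k j)).

Definition Qi (d n : nat) (a : 'M[R]_(d, n.+1)) (i : 'I_d) : set 'rV[R]_n.+1 :=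
  [set v | exists lam : 'I_n.+1 -> R,
     (forall j, 0 <= lam j) /\ \sum_j lam j = 1 /\
     v = \sum_j lam j *: vtx a i j].

Definition Qset (d n : nat) (a : 'M[R]_(d, n.+1)) : set 'M[R]_(d, n.+1) :=
  [set s | forall i : 'I_d, Qi a i (row i s)].

Definition lastcol (d n : nat) (s : 'M[R]_(d, n.+1)) : 'rV[R]_d :=
  \row_(i < d) s i ord_max.

Definition phibar (d n : nat) (phi : 'rV[R]_d -> R) (s : 'M[R]_(d, n.+1)) : R :=
  phi (lastcol s).

(* Concave envelope of g over a set D:
   conc_D(g)(s) = sup { mu | (s, mu) \in conv(hypo g|_D) }
                = sup { sum_k lam_k g(s_k) | s = sum_k lam_k s_k, s_k \in D,
                        lam >= 0, sum_k lam_k = 1 }   (finite combinations),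
   valued in the extended reals (-oo outside conv D). *)
Definition conc {T : lmodType R} (D : set T) (g : T -> R) (s : T) : \bar R :=
  ereal_sup [set y : \bar R | exists (K : nat) (lam : 'I_K -> R) (S : 'I_K -> T),
     [/\ (forall k, 0 <= lam k), \sum_k lam k = 1, (forall k, D (S k)),
         s = \sum_k lam k *: S k & y = (\sum_k lam k * g (S k))%:E]].

(* g convex on X (X need not be convex: the inequality is required whenever
   the convex combination lies in X) *)
Definition convex_fun_on (m : nat) (X : set 'rV[R]_m) (g : 'rV[R]_m -> R) : Prop :=
  forall x y (t : R), X x -> X y -> 0 <= t -> t <= 1 ->
    X (t *: x + (1 - t) *: y) ->
    g (t *: x + (1 - t) *: y) <= t * g x + (1 - t) * g y.

Definition convex_set2 (m d : nat) (W : set ('rV[R]_m * 'rV[R]_d)) : Prop :=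
  forall p q (t : R), W p -> W q -> 0 <= t -> t <= 1 ->
    W (t *: p.1 + (1 - t) *: q.1, t *: p.2 + (1 - t) *: q.2).

End Defs.
Arguments Inc1 {R d} n l tau z delta.

(* The witness is s_ij = min (f_i(x), a_ij).  If a_ik <= f_i(x) <= a_i(k+1),
   row i of s is the convex combination of the consecutive vertices v_ik and
   v_i(k+1) that interpolates f_i(x), so s lies in Q and
   conc_Q(phibar)(s) >= phibar(s) = phi(f(x)) >= mu.  The entries of Z_i(s) are
   the slopes of t |-> min (f_i(x), t) on the intervals [a_i(j-1), a_ij], so
   Z_i(s) = (1, ..., 1, theta, 0, ..., 0) lies in Delta_i, and
   delta_it = [a_i,tau(i,t) <= f_i(x)] fits between its entries at tau(i,t) and
   tau(i,t)+1.  The bounds on u give u(x) <= s, and (x, s_.n) = (x, f(x)) is in W. *)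

From mathcomp Require Import all_boot all_order all_algebra.
From mathcomp Require Import boolp classical_sets reals constructive_ereal ereal.
From mathcomp Require Import lra ring zify.
Set Implicit Arguments.
Unset Strict Implicit.
Unset Printing Implicit Defensive.

Import Order.TTheory GRing.Theory Num.Theory.
Local Open Scope ring_scope.
Local Open Scope classical_set_scope.

Section MinSlope.
Variable R : realFieldType.

Definition min_slope (y A B : R) : R := (Num.min y B - Num.min y A) / (B - A).

Lemma min_slope_ge0 (y A B : R) : A < B -> 0 <= min_slope y A B.
Proof.
move=> AB; apply: divr_ge0; last by rewrite subr_ge0 ltW.
by rewrite !minEle; case: (leP y A); case: (leP y B) => *; lra.
Qed.

Lemma min_slope_le1 (y A B : R) : A < B -> min_slope y A B <= 1.
Proof.
move=> AB; rewrite ler_pdivrMr ?subr_gt0 // mul1r.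
by rewrite !minEle; case: (leP y A); case: (leP y B) => *; lra.
Qed.

Lemma min_slope_eq1 (y A B : R) : A < B -> B <= y -> min_slope y A B = 1.
Proof.
move=> AB By; have Ay := le_trans (ltW AB) By.
by rewrite /min_slope !min_r // divff // subr_eq0 gt_eqF.
Qed.

Lemma min_slope_eq0 (y A B : R) : A <= B -> y <= A -> min_slope y A B = 0.
Proof.
move=> AB yA; have yB := le_trans yA AB.
by rewrite /min_slope !min_l // subrr mul0r.
Qed.

End MinSlope.

Lemma incr_seq_le (R : realFieldType) (n : nat) (A : nat -> R) :
  (forall j, (j < n)%N -> A j < A j.+1) ->
  forall j k, (j <= k <= n)%N -> A j <= A k.
Proof.
move=> A_incr j k /andP[jk kn].
have mono : {in [pred i | i <= n]%N &, {homo A : i k / (i <= k)%N >-> i <= k}}.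
  apply: homo_leq_in => //; first exact: le_trans.
    by move=> i1 i2 _ /= i2n i3 /andP[_ /ltnW /leq_trans]; apply.
  by move=> i _ /= Si; exact/ltW/A_incr.
by apply: mono; rewrite //= inE (leq_trans jk).
Qed.

Lemma discrete_ivt (disp : Order.disp_t) (T : orderType disp) (n : nat)
    (A : nat -> T) (y : T) :
  (0 < n)%N -> (A 0 <= y)%O -> (y <= A n)%O ->
  exists2 k, (k < n)%N & (A k <= y <= A k.+1)%O.
Proof.
move=> n0 A0y yAn; pose P k := (k < n)%N && (A k <= y)%O.
have exP : exists k, P k by exists 0%N; rewrite /P n0.
have ubP k : P k -> (k <= n)%N by case/andP=> /ltnW.
case: (ex_maxnP exP ubP) => k /andP[kn Aky] kmax.
exists k => //; rewrite Aky /=.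
have [Skn | nSk] := ltnP k.+1 n; last first.
  by have -> : k.+1 = n by apply/eqP; rewrite eqn_leq kn nSk.
rewrite leNgt; apply/negP => ySk.
by have := kmax k.+1; rewrite /P Skn (ltW ySk) ltnn => /(_ isT).
Qed.

Lemma incrn_lt_last (l : nat) (tau : nat -> nat) :
  (forall t, (t < l)%N -> (tau t < tau t.+1)%N) ->
  forall t, (t < l)%N -> (tau t < tau l)%N.
Proof.
move=> tau_incr t tl.
have mono : {in [pred k | k <= l]%N &, {homo tau : i k / (i < k)%N}}.
  apply: homo_ltn_in; first exact: ltn_trans.
    by move=> k1 k2 _ /= k2l k3 /andP[_ /ltnW /leq_trans]; apply.
  by move=> k _ Skl; exact: tau_incr.
exact: mono (ltnW tl) (leqnn l) tl.
Qed.

Lemma le_fun_conc (R : realType) (T : lmodType R) (D : set T) (g : T -> R) s :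
  D s -> ((g s)%:E <= conc D g s)%E.
Proof.
move=> Ds; apply: ereal_sup_ubound.
exists 1%N, (fun _ => 1), (fun _ => s); split => //.
- by rewrite big_ord1.
- by rewrite big_ord1 scale1r.
- by rewrite big_ord1 mul1r.
Qed.

Section VertexHull.
Variables (R : realType) (d n : nat) (a : 'M[R]_(d, n.+1)) (i : 'I_d).

Lemma Qi_vtx j : Qi a i (vtx a i j).
Proof.
exists (fun k => (k == j)%:R); split; first by move=> k; exact: ler0n.
split; first by rewrite (bigD1 j) //= eqxx big1 ?addr0 // => k /negbTE->.
by rewrite (bigD1 j) //= eqxx scale1r big1 ?addr0 // => k /negbTE->; rewrite scale0r.
Qed.

Lemma Qi_convex p q (t : R) : Qi a i p -> Qi a i q -> 0 <= t <= 1 ->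
  Qi a i (t *: p + (1 - t) *: q).
Proof.
move=> [lp [lp0 [lp1 ->]]] [lq [lq0 [lq1 ->]]] /andP[t0 t1].
exists (fun k => t * lp k + (1 - t) * lq k); split.
  by move=> k; rewrite addr_ge0 ?mulr_ge0 ?subr_ge0.
split; first by rewrite big_split /= -!mulr_sumr lp1 lq1 !mulr1 addrC subrK.
by rewrite !scaler_sumr -big_split /=; apply: eq_bigr => k _; rewrite !scalerA -scalerDl.
Qed.

End VertexHull.

Section ClippedMatrix.
Variables (R : realType) (d n : nat) (a : 'M[R]_(d, n.+1)) (y : 'rV[R]_d).
Hypothesis a_incr : forall (i : 'I_d) (j : nat), (j < n)%N -> ent a i j < ent a i j.+1.
Hypothesis y_range : forall i : 'I_d, a i ord0 <= y ord0 i /\ y ord0 i <= a i ord_max.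

Definition clip_mx : 'M[R]_(d, n.+1) := \matrix_(i, j) Num.min (y ord0 i) (a i j).

Lemma ent_clip i j : ent clip_mx i j = Num.min (y ord0 i) (ent a i j).
Proof. by rewrite /ent mxE. Qed.

Lemma lastcol_clip : lastcol clip_mx = y.
Proof. by apply/rowP => i; rewrite !mxE min_l //; case: (y_range i). Qed.

Lemma Zmap_clipS i j :
  Zmap a clip_mx i j.+1 = min_slope (y ord0 i) (ent a i j) (ent a i j.+1).
Proof. by rewrite /Zmap /= !ent_clip. Qed.

Lemma Zmap_clip_ge0 i j : (j <= n)%N -> 0 <= Zmap a clip_mx i j.
Proof. by case: j => [|j] jn //; rewrite Zmap_clipS; apply/min_slope_ge0/a_incr. Qed.

Lemma Zmap_clip_le1 i j : (j <= n)%N -> Zmap a clip_mx i j <= 1.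
Proof. by case: j => [|j] jn //; rewrite Zmap_clipS; apply/min_slope_le1/a_incr. Qed.

Lemma Zmap_clip_eq1 i j : (j <= n)%N -> ent a i j <= y ord0 i ->
  Zmap a clip_mx i j = 1.
Proof. by case: j => [|j] jn yj //; rewrite Zmap_clipS; apply/min_slope_eq1/yj/a_incr. Qed.

Lemma Zmap_clip_eq0 i j : (j < n)%N -> y ord0 i <= ent a i j ->
  Zmap a clip_mx i j.+1 = 0.
Proof. by move=> jn yj; rewrite Zmap_clipS; apply/min_slope_eq0/yj/ltW/a_incr. Qed.

Lemma Zmap_clip_Delta i : in_Delta n (Zmap a clip_mx i).
Proof.
split=> //; split; last exact: Zmap_clip_ge0.
move=> j jn; have [yj | jy] := leP (y ord0 i) (ent a i j).
  by rewrite Zmap_clip_eq0 //; apply/Zmap_clip_ge0/ltnW.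
by rewrite (Zmap_clip_eq1 (ltnW jn) (ltW jy)); apply: Zmap_clip_le1.
Qed.

Lemma Inc1_clip (l : 'I_d -> nat) (tau : 'I_d -> nat -> nat) :
  (forall i, tau i (l i) = n) ->
  (forall i t, (t < l i)%N -> (tau i t < tau i t.+1)%N) ->
  Inc1 n l tau (Zmap a clip_mx)
    (fun i t => if ent a i (tau i t) <= y ord0 i then 1 else 0).
Proof.
move=> tau_last tau_incr i; split; first exact: Zmap_clip_Delta.
move=> t t1 tl; have tl' : (t < l i)%N by lia.
have taun : (tau i t < n)%N.
  by rewrite -(tau_last i); apply: incrn_lt_last tl'; apply: tau_incr.
have [yt | ty] := leP (ent a i (tau i t)) (y ord0 i).
  split; first by right.
  by rewrite Zmap_clip_eq1 ?(ltnW taun) //; split=> //; apply: Zmap_clip_le1.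
split; first by left.
by rewrite Zmap_clip_eq0 ?(ltW ty) //; split=> //; apply/Zmap_clip_ge0/ltnW.
Qed.

Lemma row_clip_Qi i : (0 < n)%N -> Qi a i (row i clip_mx).
Proof.
move=> n0; have [y0 yn] := y_range i.
have e0 : inord 0 = ord0 :> 'I_n.+1 by apply/val_inj; rewrite /= inordK.
have en : inord n = ord_max :> 'I_n.+1 by apply/val_inj; rewrite /= inordK.
have [k kn /andP[yk ySk]] : exists2 k, (k < n)%N & ent a i k <= y ord0 i <= ent a i k.+1.
  by apply: discrete_ivt n0 _ _; rewrite /ent ?e0 ?en.
have akS : ent a i k < ent a i k.+1 := a_incr i kn.
have akS0 : ent a i k.+1 - ent a i k != 0 by rewrite subr_eq0 gt_eqF.
pose t := (ent a i k.+1 - y ord0 i) / (ent a i k.+1 - ent a i k).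
have t01 : 0 <= t <= 1.
  by rewrite /t divr_ge0 ?ler_pdivrMr ?subr_gt0 ?subr_ge0 ?(ltW akS) //= mul1r; lra.
suff -> : row i clip_mx = t *: vtx a i (inord k) + (1 - t) *: vtx a i (inord k.+1).
  by apply: Qi_convex => //; apply: Qi_vtx.
apply/rowP => c; rewrite !mxE !inordK ?ltnS ?(ltnW kn) //.
have ac : a i c = ent a i c by rewrite /ent inord_val.
have [ck | kc] := leqP c k.
  rewrite (minn_idPl (leqW ck)) inord_val min_r; first ring.
  by rewrite ac; apply: le_trans yk; apply: (incr_seq_le (a_incr i)); rewrite ck (ltnW kn).
rewrite (minn_idPr kc) min_l; first by rewrite -/(ent a i k) -/(ent a i k.+1) /t; field.
by rewrite ac; apply: le_trans ySk _; apply: (incr_seq_le (a_incr i)); rewrite kc -ltnS ltn_ord.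
Qed.

Lemma clip_in_Q : (0 < n)%N -> Qset a clip_mx.
Proof. by move=> n0 i; exact: row_clip_Qi. Qed.

Lemma le_clip (v : 'M[R]_(d, n.+1)) :
  (forall i, [/\ v i ord0 = a i ord0, v i ord_max = y ord0 i &
     forall j : 'I_n.+1, (1 <= j)%N -> (j <= n.-1)%N ->
       v i j <= Num.min (y ord0 i) (a i j)]) ->
  forall i j, v i j <= clip_mx i j.
Proof.
move=> v_bounds i j; have [v0 vn vmid] := v_bounds i; have [y0 yn] := y_range i.
rewrite mxE; have [->|j0] := eqVneq j ord0; first by rewrite v0 le_min lexx y0.
have [->|jn] := eqVneq j ord_max; first by rewrite vn le_min lexx yn.
move: jn; rewrite -val_eqE /= => jn.
by apply: vmid; [rewrite lt0n | have := ltn_ord j; lia].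
Qed.

End ClippedMatrix.

Theorem theorem4p1 (R : realType) (m d n : nat) (a : 'M[R]_(d, n.+1))
  (l : 'I_d -> nat) (tau : 'I_d -> nat -> nat)
  (X : set 'rV[R]_m) (f : 'rV[R]_m -> 'rV[R]_d) (phi : 'rV[R]_d -> R)
  (u : 'rV[R]_m -> 'M[R]_(d, n.+1)) (W : set ('rV[R]_m * 'rV[R]_d)) :
  (0 < d)%N -> (0 < n)%N ->
  (forall (i : 'I_d) (j : nat), (j < n)%N -> ent a i j < ent a i j.+1) ->
  (forall i : 'I_d, (1 <= l i)%N) ->
  (forall i : 'I_d, tau i 0%N = 0%N) ->
  (forall i : 'I_d, tau i (l i) = n) ->
  (forall (i : 'I_d) (t : nat), (t < l i)%N -> (tau i t < tau i t.+1)%N) ->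
  (forall x, X x -> forall i : 'I_d,
      a i ord0 <= f x ord0 i /\ f x ord0 i <= a i ord_max) ->
  (forall (i : 'I_d) (j : 'I_n.+1), convex_fun_on X (fun x => u x i j)) ->
  (forall x, X x -> forall i : 'I_d,
      [/\ u x i ord0 = a i ord0,
          u x i ord_max = f x ord0 i &
          forall j : 'I_n.+1, (1 <= j)%N -> (j <= n.-1)%N ->
            u x i j <= Num.min (f x ord0 i) (a i j)]) ->
  convex_set2 W ->
  (forall x, X x -> W (x, f x)) ->
  forall (x : 'rV[R]_m) (mu : R), X x -> mu <= phi (f x) ->
    exists (s : 'M[R]_(d, n.+1)) (delta : 'I_d -> nat -> R),
      [/\ (mu%:E <= conc (Qset a) (phibar phi) s)%E,
          Inc1 n l tau (Zmap a s) delta,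
          (forall (i : 'I_d) (j : 'I_n.+1), u x i j <= s i j) &
          W (x, lastcol s)].
Proof.
move=> _ n0 a_incr _ _ tau_last tau_incr f_range _ u_bounds _ W_graph x mu Xx mu_le.
have f_range_x := f_range x Xx.
exists (clip_mx a (f x)),
  (fun i t => if ent a i (tau i t) <= f x ord0 i then 1 else 0).
have s_last := lastcol_clip f_range_x.
split.
- apply: le_trans (le_fun_conc (phibar phi) (clip_in_Q a_incr f_range_x n0)).
  by rewrite lee_fin /phibar s_last.
- exact: Inc1_clip.
- exact: (le_clip f_range_x (u_bounds x Xx)).
- by rewrite s_last; apply: W_graph.
Qed.
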